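(* For all $m\ge2$ and $n\ge1$, the Hilbert tensor $\mathcal{H}\in\mathbb{S}_{m,n}$ is strongly completely positive.
   Context: The Hilbert tensor has entries $h_{i_1\ldots i_m}=\frac{1}{i_1+\dots+i_m-m+1}$, $i_j\in[n]$. A tensor $\mathcal{A}\in\mathbb{S}_{m,n}$ is strongly completely positive if $\mathcal{A}=\sum_{k=1}^r(u^{(k)})^m$ with $u^{(k)}\in\mathbb{R}^n_+$ and $\mathrm{span}\{u^{(1)},\dots,u^{(r)}\}=\mathbb{R}^n$, where $(u^m)_{i_1\ldots i_m}=u_{i_1}\cdots u_{i_m}$. *)

From HB Require Import structures.
From mathcomp Require Import all_boot all_order all_algebra.
Set Implicit Arguments. Unset Strict Implicit. Unset Printing Implicit Defensive.
Import Order.TTheory GRing.Theory Num.Theory.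
Local Open Scope ring_scope.

Definition tensor (R : Type) (m n : nat) := {ffun 'I_m -> 'I_n} -> R.

(* Hilbert tensor: h_{i_1..i_m} = 1/(i_1+...+i_m - m + 1) with 1-based
   indices, i.e. 1/((sum of 0-based indices) + 1). *)
Definition hilbert_tensor (R : fieldType) (m n : nat) : tensor R m n :=
  fun i => ((\sum_(j < m) nat_of_ord (i j)).+1)%:R^-1.

Definition tpow {R : nzRingType} (m : nat) {n : nat} (u : 'I_n -> R) : tensor R m n :=
  fun i => \prod_(j < m) u (i j).

(* Strong complete positivity: A = sum_{k<r} (u^(k))^m with u^(k) in R^n_+,
   the u^(k) being the rows of U, and span{u^(1),...,u^(r)} = R^n,
   i.e. the row space of U has dimension n. *)
Definition strongly_completely_positive (R : numFieldType) (m n : nat)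
  (A : tensor R m n) : Prop :=
  exists (r : nat) (U : 'M[R]_(r, n)),
    [/\ (forall k j, 0 <= U k j),
        \rank U = n &
        forall i, A i = \sum_(k < r) @tpow R m n (fun j => U k j) i].

Arguments hilbert_tensor R m n i : clear implicits.
Arguments tpow {R} m {n} u i.

From HB Require Import structures.
From mathcomp Require Import all_boot all_order all_algebra.
From mathcomp Require Import polyorder polyrcf cauchyreals zify.
Import Order.TTheory GRing.Theory Num.Theory.
Local Open Scope ring_scope.
Set Implicit Arguments. Unset Strict Implicit. Unset Printing Implicit Defensive.

(* With s = i_1 + ... + i_m (0-based indices), the Hilbert entry is the moment
   1/(s + 1) = int_0^1 x^s dx, and s <= m(n - 1).  Gauss-Legendre quadrature
   with k = mn nodes t_i in (0, 1) (the roots of the k-th derivative of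
   (x(1 - x))^k) and positive weights w_i is exact up to degree 2k - 1, so
     1/(s + 1) = sum_i w_i t_i^s = sum_i prod_j (w_i^(1/m) t_i^(i_j)),
   i.e. H = sum_i u_i^m with u_i = w_i^(1/m) (1, t_i, ..., t_i^(n-1)) >= 0.
   The k >= n nodes are distinct, so these Vandermonde rows span R^n.
   Positivity of the weights: w_i is the quadrature value of the square of the
   i-th Lagrange polynomial, hence its integral. *)

Section Integral01.
Variable R : numFieldType.
Implicit Types p q : {poly R}.

Definition integral01 p : R := \sum_(i < size p) p`_i / i.+1%:R.

Lemma integral01E d p :
  (size p <= d)%N -> integral01 p = \sum_(i < d) p`_i / i.+1%:R.
Proof.
move=> spd; rewrite /integral01 (big_ord_widen d (fun i => p`_i / i.+1%:R) spd).
rewrite [RHS](bigID (fun i : 'I_d => (i < size p)%N)) /=.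
rewrite [X in _ = _ + X]big1 ?addr0 // => i.
by rewrite -leqNgt => hi; rewrite nth_default // mul0r.
Qed.

Lemma integral01D p q : integral01 (p + q) = integral01 p + integral01 q.
Proof.
pose d := maxn (size p) (size q).
rewrite !(@integral01E d) ?leq_maxl ?leq_maxr ?(leq_trans (size_polyD _ _)) //.
by rewrite -big_split; apply: eq_bigr => i _; rewrite coefD mulrDl.
Qed.

Lemma integral01Z c p : integral01 (c *: p) = c * integral01 p.
Proof.
rewrite (@integral01E (size p)) ?size_scale_leq // mulr_sumr.
by apply: eq_bigr => i _; rewrite coefZ mulrA.
Qed.

HB.instance Definition _ :=
  GRing.isSemilinear.Build R {poly R} R _ integral01 (integral01Z, integral01D).

Lemma integral01_deriv p : integral01 p^`() = p.[1] - p.[0].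
Proof.
rewrite (@integral01E (size p)) ?(leq_trans (size_poly _ _)) ?leq_pred //.
have -> : \sum_(i < size p) p^`()`_i / i.+1%:R = \sum_(i < size p) p`_i.+1.
  by apply: eq_bigr => i _; rewrite coef_deriv -(mulr_natr p`_i.+1) mulfK ?pnatr_eq0.
have -> : p.[1] = \sum_(i < (size p).+1) p`_i.
  rewrite horner_coef big_ord_recr /= nth_default // addr0.
  by apply: eq_bigr => i _; rewrite expr1n mulr1.
rewrite horner_coef0 big_ord_recl addrC addKr.
by apply: eq_bigr => i _; rewrite lift0.
Qed.

Lemma integral01_Xn s : integral01 'X^s = s.+1%:R^-1.
Proof.
rewrite /integral01 size_polyXn big_ord_recr /= coefXn eqxx mul1r big1 ?add0r //.
by move=> i _; rewrite coefXn ltn_eqF // mul0r.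
Qed.

Definition antideriv p : {poly R} :=
  \poly_(i < (size p).+1) (if i is j.+1 then p`_j / i%:R else 0).

Lemma antiderivK p : (antideriv p)^`() = p.
Proof.
apply/polyP => i; rewrite coef_deriv coef_poly ltnS.
case: ltnP => [_|spi]; first by rewrite -[_ *+ i.+1]mulr_natr mulfVK ?pnatr_eq0.
by rewrite mul0rn nth_default.
Qed.

End Integral01.

Lemma integral01_gt0 (R : rcfType) (g : {poly R}) :
  g != 0 -> (forall x, 0 <= g.[x]) -> 0 < integral01 g.
Proof.
move=> g_neq0 g_ge0; rewrite -[g]antiderivK integral01_deriv subr_gt0.
pose G := antideriv g.
(* [G] increases strictly up to the first positive root [c] of [g], then
   weakly. *)
pose c := next_root g 0 1.
have c_gt0 : 0 < c by apply: next_root_gt.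
have c_le1 : c <= 1.
  by have := next_root_in g 0 1; rewrite in_itv /= max_l ?ler01 // => /andP[].
have G0c : G.[0] < G.[c].
  apply: (@derpr _ _ 0 c); last by rewrite in_itv /= c_gt0 lexx.
  move=> x x0c; rewrite antiderivK lt_def g_ge0 andbT.
  exact: next_noroot x0c.
apply: (lt_le_trans G0c); apply: (@ler_hornerW _ c 1) => //.
- by move=> x _; rewrite antiderivK.
- by rewrite in_itv /= lexx c_le1.
- by rewrite in_itv /= c_le1 lexx.
Qed.

Lemma dvdp_deriv_XsubC_exp (R : fieldType) (a : R) e (p : {poly R}) :
  ('X - a%:P) ^+ e.+1 %| p -> ('X - a%:P) ^+ e %| p^`().
Proof.
case/dvdpP => q ->; rewrite derivM deriv_exp derivXsubC mul1r /=.
rewrite dvdp_add ?dvdp_mull //; first by rewrite exprSr dvdp_mulr.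
by rewrite -mulr_natr dvdp_mulr.
Qed.

Section Rolle.
Variable R : rcfType.
Implicit Types p : {poly R}.

Lemma poly_rolle_path p x0 s : path <%R x0 s -> all (root p) (x0 :: s) ->
  exists t : seq R, [/\ size t = size s, sorted <%R t,
    all (fun c => x0 < c < last x0 s) t & all (root p^`()) t].
Proof.
elim: s x0 => [|x1 s IHs] x0 /=; first by exists [::].
case/andP=> lt01 path1 /and3P[/rootP p0 /rootP p1 ps].
have [t [st sorted_t t_in rt]] :=
  IHs x1 path1 (introT andP (conj (introT rootP p1) ps)).
have [c] := @poly_rolle _ x0 x1 p lt01 (etrans p0 (esym p1)).
rewrite in_itv /= => /andP[x0c cx1] p'c.
have x1_last : x1 <= last x1 s.
  case: s path1 {IHs st t_in ps} => [_|y s]; first exact: lexx.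
  rewrite (path_sortedE lt_trans) => /andP[/allP x1s _].
  by apply/ltW/x1s; rewrite /= mem_last.
have /allP t_bnd := t_in.
exists (c :: t); split => /=; first by rewrite st.
- rewrite (path_sortedE lt_trans) sorted_t andbT; apply/allP => y /t_bnd.
  by case/andP => /(lt_trans cx1).
- rewrite x0c (lt_le_trans cx1 x1_last); apply/allP => y /t_bnd.
  by case/andP => /(lt_trans lt01) ->.
- by rewrite /root p'c eqxx.
Qed.

End Rolle.

Section ShiftedLegendre.
Variables (R : rcfType) (k : nat).

(* By Rodrigues' formula, [rodrigues^`(k)] is a multiple of the k-th Legendre
   polynomial shifted to [0, 1]. *)
Definition rodrigues : {poly R} := ('X * (1 - 'X)) ^+ k.

Lemma dvdp_rodrigues_derivn j : (j <= k)%N ->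
  ('X - 0%:P) ^+ (k - j) %| rodrigues^`(j) /\
  ('X - 1%:P) ^+ (k - j) %| rodrigues^`(j).
Proof.
elim: j => [|j IHj] lt_jk.
  rewrite subn0 derivn0 /rodrigues exprMn subr0 dvdp_mulr //; split=> //.
  by rewrite dvdp_mull // dvdp_exp2r // dvdp_XsubCl /root !hornerE subrr.
have [dvd0 dvd1] := IHj (ltnW lt_jk).
have e : (k - j = (k - j.+1).+1)%N by rewrite subnSK.
by rewrite derivnS; split; apply: dvdp_deriv_XsubC_exp; rewrite -e.
Qed.

Lemma root01_rodrigues_derivn j : (j < k)%N ->
  root rodrigues^`(j) 0 /\ root rodrigues^`(j) 1.
Proof.
move=> lt_jk; have [dvd0 dvd1] := dvdp_rodrigues_derivn (ltnW lt_jk).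
have e : (k - j = (k - j).-1.+1)%N by rewrite prednK ?subn_gt0.
rewrite -!dvdp_XsubCl; split; [apply: dvdp_trans dvd0 | apply: dvdp_trans dvd1];
  by rewrite e exprS dvdp_mulr.
Qed.

Lemma rodrigues_derivn_roots j : (j <= k)%N -> exists s : seq R,
  [/\ size s = j, sorted <%R s, all (fun x => 0 < x < 1) s &
      all (root rodrigues^`(j)) s].
Proof.
elim: j => [|j IHj] lt_jk; first by exists [::].
have [s [size_s sorted_s s01 roots_s]] := IHj (ltnW lt_jk).
have [root0 root1] := root01_rodrigues_derivn lt_jk.
have /allP s_bnd := s01.
have path_s : path <%R 0 (rcons s 1).
  rewrite rcons_path (path_sortedE lt_trans) sorted_s andbT; apply/andP; split.
    by apply/allP => x /s_bnd /andP[].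
  have : last 0 s \in 0 :: s by apply: mem_last.
  by rewrite inE => /predU1P[->|/s_bnd /andP[]]; first exact: ltr01.
have roots : all (root rodrigues^`(j)) (0 :: rcons s 1).
  by rewrite /= root0 all_rcons root1 roots_s.
have [t [size_t sorted_t t01 roots_t]] := poly_rolle_path path_s roots.
exists t; split => //; first by rewrite size_t size_rcons size_s.
by rewrite last_rcons in t01.
Qed.

Lemma integral01_rodrigues_derivnM j (r : {poly R}) :
  (j <= k)%N -> (size r <= j)%N ->
  integral01 (rodrigues^`(j) * r) = 0.
Proof.
elim: j r => [|j IHj] r lt_jk srj.
  by move: srj; rewrite leqn0 size_poly_eq0 => /eqP->; rewrite mulr0 raddf0.
have [/rootP root0 /rootP root1] := root01_rodrigues_derivn lt_jk.
have -> : rodrigues^`(j.+1) * r = (rodrigues^`(j) * r)^`() - rodrigues^`(j) * r^`().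
  by rewrite derivM -derivnS addrK.
have size_r' : (size r^`() <= j)%N by rewrite size_deriv -subn1 leq_subLR add1n.
rewrite raddfB /= integral01_deriv (IHj _ (ltnW lt_jk) size_r').
by rewrite !hornerM root0 root1 !mul0r subrr subr0.
Qed.

Lemma size_rodrigues_derivn : size rodrigues^`(k) = k.+1.
Proof.
have size_X1X : size ('X * (1 - 'X) : {poly R}) = 3%N.
  rewrite -[1 - 'X]opprB mulrN size_polyN mulrC size_mulX ?polyXsubC_eq0 //.
  by rewrite -polyC1 size_XsubC.
rewrite size_derivn /rodrigues my_size_exp -?size_poly_eq0 ?size_X1X //.
by rewrite mul2n -addnn -addSn addnK.
Qed.

End ShiftedLegendre.

Section Quadrature.
Variables (R : rcfType) (k : nat) (x : nat -> R).
Hypotheses (k_gt0 : (0 < k)%N) (x_inj : injective x).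

Definition node_poly : {poly R} := \prod_(i < k) ('X - (x i)%:P).

Hypothesis node_poly_orth :
  forall d : {poly R}, (size d <= k)%N -> integral01 (node_poly * d) = 0.

Local Notation lagrange_ i := (tnth (lagrange k x) i : {poly R}).

Definition quad_weight (i : 'I_k) : R := integral01 (lagrange_ i).

Lemma size_node_poly : size node_poly = k.+1.
Proof. by rewrite size_prod_XsubC [index_enum _]unlock -enumT size_enum_ord. Qed.

Lemma root_node_poly (i : 'I_k) : root node_poly (x i).
Proof.
by rewrite /root horner_prod; apply/prodf_eq0; exists i; rewrite ?hornerXsubC ?subrr.
Qed.

Lemma quadrature_exact (p : {poly R}) : (size p <= k + k)%N ->
  integral01 p = \sum_(i < k) quad_weight i * p.[x i].
Proof.
move=> size_p.
have node_neq0 : node_poly != 0 by rewrite -size_poly_eq0 size_node_poly.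
rewrite [in LHS](divp_eq p node_poly) raddfD /= mulrC node_poly_orth ?add0r;
  last first.
  by rewrite size_divp // size_node_poly leq_subLR.
have size_mod : (size (p %% node_poly)%R <= k)%N.
  by rewrite -ltnS -size_node_poly ltn_modp.
rewrite {1}(lagrange_gen k_gt0 x_inj size_mod) raddf_sum /=; apply: eq_bigr => i _.
rewrite mul_polyC integral01Z mulrC; congr (_ * _).
rewrite [in RHS](divp_eq p node_poly) hornerD hornerM.
by rewrite (rootP (root_node_poly i)) mulr0 add0r.
Qed.

Lemma quad_weight_gt0 i : 0 < quad_weight i.
Proof.
have l_ii : (lagrange_ i).[x i] = 1 by rewrite lagrange_sample // eqxx.
have l_neq0 : lagrange_ i != 0.
  by apply: contra_eq_neq l_ii => ->; rewrite horner0 eq_sym oner_neq0.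
have -> : quad_weight i = integral01 (lagrange_ i ^+ 2).
  rewrite quadrature_exact; last first.
    by rewrite (leq_trans (size_poly_exp_leq _ _)) // size_lagrange_ //; lia.
  rewrite (bigD1 i) //= horner_exp l_ii expr1n mulr1 big1 ?addr0 // => j ji.
  by rewrite horner_exp lagrange_sample // eq_sym (negPf ji) expr0n mulr0.
by apply: integral01_gt0; [rewrite expf_neq0 | move=> y; rewrite horner_exp sqr_ge0].
Qed.

End Quadrature.

Theorem gauss_legendre_quadrature (R : rcfType) k : (0 < k)%N ->
  exists (t w : 'I_k -> R), [/\ injective t, (forall i, 0 < t i < 1),
    (forall i, 0 < w i) &
    forall p : {poly R}, (size p <= k + k)%N ->
      integral01 p = \sum_(i < k) w i * p.[t i]].
Proof.
move=> k_gt0.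
have [s [size_s sorted_s /allP s01 roots_s]] := rodrigues_derivn_roots R (leqnn k).
(* Lagrange interpolation in [qpoly] wants injective nodes indexed by nat:
   pad the roots with points above 1. *)
pose x i : R := if (i < k)%N then s`_i else i.+2%:R.
have x01 i : (i < k)%N -> 0 < x i < 1.
  by move=> lt_ik; rewrite /x lt_ik; apply/s01/mem_nth; rewrite size_s.
have x_gt1 i : (k <= i)%N -> 1 < x i by rewrite /x ltnNge => ->; rewrite ltr1n.
have x_lt1 i : (x i < 1) = (i < k)%N.
  case: (ltnP i k) => [/x01 /andP[_ ->] // | /x_gt1 gt1].
  by apply/negbTE; rewrite -leNgt ltW.
have x_inj : injective x.
  move=> i j xij; have := x_lt1 i; rewrite xij x_lt1.
  case: (ltnP j k) => [lt_jk /esym lt_ik | le_kj /esym/negbT].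
    move: xij; rewrite /x lt_ik lt_jk => /eqP.
    by rewrite nth_uniq ?size_s ?lt_sorted_uniq // => /eqP.
  rewrite -leqNgt => le_ki; move: xij; rewrite /x ltnNge le_ki ltnNge le_kj /=.
  by move/eqP; rewrite eqr_nat => /eqP[].
pose L := (rodrigues R k)^`(k).
have lead_L_neq0 : lead_coef L != 0.
  by rewrite lead_coef_eq0 -size_poly_eq0 size_rodrigues_derivn.
have L_prod : L = lead_coef L *: \prod_(z <- s) ('X - z%:P).
  apply: all_roots_prod_XsubC; rewrite ?size_rodrigues_derivn ?size_s //.
  by rewrite uniq_rootsE lt_sorted_uniq.
have node_poly_s : node_poly k x = \prod_(z <- s) ('X - z%:P).
  by rewrite (big_nth 0) size_s big_mkord; apply: eq_bigr => i _; rewrite /x ltn_ord.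
have orth (d : {poly R}) : (size d <= k)%N -> integral01 (node_poly k x * d) = 0.
  move=> size_d; apply: (mulfI lead_L_neq0); rewrite mulr0 -integral01Z.
  by rewrite scalerAl node_poly_s -L_prod integral01_rodrigues_derivnM.
exists (fun i : 'I_k => x i), (quad_weight x); split.
- by move=> i j /x_inj /val_inj.
- by move=> i; apply: x01.
- exact: quad_weight_gt0 k_gt0 x_inj orth.
- exact: quadrature_exact k_gt0 x_inj orth.
Qed.

Lemma rank_scaled_vandermonde (F : fieldType) r n (a t : 'I_r -> F) :
  injective t -> (n <= r)%N -> (forall i, a i != 0) ->
  \rank (\matrix_(i < r, j < n) (a i * t i ^+ j)) = n.
Proof.
move=> t_inj le_nr a_neq0; rewrite -mxrank_tr; apply/eqP/inj_row_free => v vM0.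
have v_root i : root (rVpoly v) (t i).
  have /matrixP/(_ 0 i) := vM0; rewrite !mxE => vMi.
  have : a i * (rVpoly v).[t i] = 0.
    rewrite horner_poly mulr_sumr -[RHS]vMi; apply: eq_bigr => j _.
    by rewrite valK !mxE mulrCA.
  by move/eqP; rewrite mulf_eq0 (negPf (a_neq0 i)).
have : rVpoly v = 0.
  apply: (@roots_geq_poly_eq0 _ _ [seq t i | i <- enum 'I_r]).
  - by apply/allP => _ /mapP[i _ ->].
  - by rewrite map_inj_uniq ?enum_uniq.
  - by rewrite size_map size_enum_ord (leq_trans (size_poly _ _)).
by move=> v0; rewrite -[v]rVpolyK v0 linear0.
Qed.

Lemma tpow_scaled_powers (R : comNzRingType) m n (c y : R) idx :
  tpow m (fun j : 'I_n => c * y ^+ j) idx = c ^+ m * y ^+ (\sum_(l < m) idx l)%N.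
Proof. by rewrite /tpow big_split prodr_const card_ord prodrXr. Qed.

Theorem mainTheorem19 (R : rcfType) (m n : nat) :
  (2 <= m)%N -> (1 <= n)%N ->
  strongly_completely_positive (hilbert_tensor R m n).
Proof.
move=> m_ge2 n_ge1; have m_gt0 : (0 < m)%N by apply: leq_trans m_ge2.
have mn_gt0 : (0 < m * n)%N by rewrite muln_gt0 m_gt0.
have [t [w [t_inj t01 w_gt0 quadrature]]] := gauss_legendre_quadrature R mn_gt0.
have [a a_gt0 a_pow] :
    {a : 'I_(m * n) -> R | forall i, 0 < a i & forall i, a i ^+ m = w i}.
  exists (fun i => sval (nth_root m.-1 (w_gt0 i))) => i; case: nth_root => //= y _.
  by rewrite prednK.
have t_ge0 i : 0 <= t i by case/andP: (t01 i) => /ltW.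
exists (m * n)%N, (\matrix_(i, j) (a i * t i ^+ j)); split.
- by move=> i j; rewrite mxE mulr_ge0 ?exprn_ge0 ?t_ge0 ?(ltW (a_gt0 i)).
- by apply: rank_scaled_vandermonde; rewrite ?leq_pmull // => i; rewrite gt_eqF.
move=> idx; have sum_le : (\sum_(l < m) idx l <= m * n)%N.
  rewrite -[m in (_ <= m * _)%N]card_ord -sum_nat_const.
  by apply: leq_sum => l _; apply/ltnW.
rewrite /hilbert_tensor -integral01_Xn quadrature ?size_polyXn; last by lia.
apply: eq_bigr => i _; rewrite hornerXn -a_pow -tpow_scaled_powers.
by apply: eq_bigr => l _; rewrite mxE.
Qed.
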